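(* Let $W$ be a graphon satisfying the Regularity Condition. For every $y\in(0,1)$ there exists $C>0$ such that for all $n\ge2$ and $u\in[0,1]$, with $d=D(y)$, $$H_n(y,u)=\frac{d-W(y,u)}{D'(y)}+R_n(u),\qquad |R_n(u)|\le Cn^{-1/4}.$$ Moreover, for all $y\in(0,1)$ and $u\in[0,1]$ with $u\ne y$: $|H_n^\star(y,u)|\le1$ for all $n\ge2$, and $\lim_{n\to\infty}H_n^\star(y,u)=\mathbf 1_{\{u\le y\}}-y$.
   Context: A graphon is a symmetric measurable $W:[0,1]^2\to[0,1]$; $D(x)=\int_0^1W(x,y)dy$. Regularity Condition: $W\in\mathcal{C}^3([0,1]^2)$, $D'>0$, $W\le1-\varepsilon_0$ and $D\ge\varepsilon_0$ for some $\varepsilon_0\in(0,1/2)$. $X=(X_i)$ i.i.d. uniform; $G_n$ is the graph on $[n]$ where, conditionally on $X$, $\{i,j\}$ is an edge independently with probability $W(X_i,X_j)$; $D_i^{(n)}$ is the degree of $i$ in $G_n$ divided by $n-1$. With $d=D(y)$: $c_n(y)=\mathbb P(D_1^{(n+1)}\le d)$, $H_n(y,u)=n\big(\mathbb E[\mathbf 1_{\{D_1^{(n+1)}\le d\}}\mid X_2=u]-c_n(y)\big)$, $H_n^\star(y,u)=\mathbb E[\mathbf 1_{\{D_1^{(n+1)}\le d\}}\mid X_1=u]-c_n(y)$. *)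

From Stdlib Require Import Reals List Arith.
From Coquelicot Require Import Coquelicot.
Open Scope R_scope.

(* A graphon is represented by a function W : R -> R -> R; only its values
   on [0,1]^2 are relevant for the graphon axioms. *)
Definition graphon (W : R -> R -> R) : Prop :=
  (forall x y, 0 <= x <= 1 -> 0 <= y <= 1 -> W x y = W y x) /\
  (forall x y, 0 <= x <= 1 -> 0 <= y <= 1 -> 0 <= W x y <= 1).

Definition Dfun (W : R -> R -> R) (x : R) : R := RInt (fun y => W x y) 0 1.

Definition pd (b : bool) (f : R -> R -> R) : R -> R -> R :=
  if b then fun x y => Derive (fun t => f t y) x
  else fun x y => Derive (fun t => f x t) y.

Definition iter_pd (s : list bool) (f : R -> R -> R) : R -> R -> R :=
  fold_right pd f s.

Definition C3 (f : R -> R -> R) : Prop :=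
  forall s : list bool, (length s <= 3)%nat ->
    (forall x y, continuous (fun p : R * R => iter_pd s f (fst p) (snd p)) (x, y)) /\
    ((length s < 3)%nat -> forall x y,
        ex_derive (fun t => iter_pd s f t y) x /\
        ex_derive (fun t => iter_pd s f x t) y).

Definition regularity_condition (W : R -> R -> R) : Prop :=
  C3 W /\
  (forall x, 0 <= x <= 1 -> 0 < Derive (Dfun W) x) /\
  exists eps0, 0 < eps0 < 1/2 /\
    (forall x y, 0 <= x <= 1 -> 0 <= y <= 1 -> W x y <= 1 - eps0) /\
    (forall x, 0 <= x <= 1 -> eps0 <= Dfun W x).

(* update of a latent-position vector (indexed by nat, vertices 1..m) *)
Definition upd (x : nat -> R) (i : nat) (t : R) : nat -> R :=
  fun j => if Nat.eqb j i then t else x j.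

(* iterated integral over [0,1] of the coordinates listed in l
   (X_i i.i.d. uniform on [0,1]) *)
Fixpoint iint (l : list nat) (F : (nat -> R) -> R) (x : nat -> R) : R :=
  match l with
  | nil => F x
  | i :: l' => RInt (fun t => iint l' F (upd x i t)) 0 1
  end.

Fixpoint cfgs (m : nat) : list (list bool) :=
  match m with
  | O => nil :: nil
  | S m' => flat_map (fun c => (true :: c) :: (false :: c) :: nil) (cfgs m')
  end.

Definition sumR (l : list R) : R := fold_right Rplus 0 l.

(* probability of a given configuration c of the edges {1, j}, j = k, k+1, ...,
   conditionally on the latent positions x *)
Fixpoint cfg_prob (W : R -> R -> R) (x : nat -> R) (k : nat) (c : list bool) : R :=
  match c with
  | nil => 1
  | b :: c' =>
      (if b then W (x 1%nat) (x k) else 1 - W (x 1%nat) (x k))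
      * cfg_prob W x (S k) c'
  end.

Definition ntrue (c : list bool) : nat := length (filter (fun b => b) c).

(* P( D_1^{(n+1)} <= d | X = x ) in the graph G_{n+1} on vertices 1..n+1:
   the edges {1,j}, j = 2..n+1, are independent Bernoulli(W(x_1,x_j)),
   and D_1^{(n+1)} = deg(1) / n. *)
Definition condP (W : R -> R -> R) (n : nat) (d : R) (x : nat -> R) : R :=
  sumR (map (fun c => cfg_prob W x 2 c *
                      (if Rle_dec (INR (ntrue c) / INR n) d then 1 else 0))
            (cfgs n)).

Definition x0 : nat -> R := fun _ => 0.

(* c_n(y) = P(D_1^{(n+1)} <= D(y)) *)
Definition c_n (W : R -> R -> R) (n : nat) (y : R) : R :=
  iint (seq 1 (S n)) (condP W n (Dfun W y)) x0.

(* E[ 1{D_1^{(n+1)} <= D(y)} | X_2 = u ] *)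
Definition condE_X2 (W : R -> R -> R) (n : nat) (y u : R) : R :=
  iint (1%nat :: seq 3 (n - 1)) (condP W n (Dfun W y)) (upd x0 2 u).

(* E[ 1{D_1^{(n+1)} <= D(y)} | X_1 = u ] *)
Definition condE_X1 (W : R -> R -> R) (n : nat) (y u : R) : R :=
  iint (seq 2 n) (condP W n (Dfun W y)) (upd x0 1 u).

Definition H_n (W : R -> R -> R) (n : nat) (y u : R) : R :=
  INR n * (condE_X2 W n y u - c_n W n y).

Definition H_n_star (W : R -> R -> R) (n : nat) (y u : R) : R :=
  condE_X1 W n y u - c_n W n y.

From Stdlib Require Import Reals List Arith Lia Lra.
From Coquelicot Require Import Coquelicot.
Open Scope R_scope.

(* Given the positions, the degree of vertex 1 is a sum of independent Bernoulli
   variables with parameters W(x_1, x_j), and its law is affine in each of them;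
   integrating out x_j thus replaces W(x_1, x_j) by D(x_1). Hence
   H*_n(y,u) = B_n(D(u)) - int_0^1 psi_n and
   H_n(y,u) = int_0^1 (W(t,u) - D(t)) B_n'(D(t)) dt, where B_n(p) is the
   probability that Bin(n,p)/n <= D(y) and psi_n(t) = B_n(D(t)).
   By Chebyshev's inequality and D' >= m > 0, psi_n differs from the step
   1_{t <= y} by at most 4 b^2 / (|t - y| + b)^2 with b = 1 / (2 m sqrt n), whose
   integral is O(b). This gives the limit of H*_n. For H_n, integrate by parts
   against h = (W(., u) - D) / D', whose derivative is bounded uniformly in u
   since W is C^3: the boundary terms and the step approximation leave a
   remainder O(n^{-1/2}), which is O(n^{-1/4}). *)

(* [poisson_binomial js p g] is E[g(S)], S the number of successes among
   independent Bernoulli(p j), j in js; [bernstein m p g] is the case of m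
   trials of parameter p, i.e. the Bernstein polynomial of g. *)
Fixpoint poisson_binomial (js : list nat) (p g : nat -> R) : R :=
  match js with
  | nil => g 0%nat
  | j :: js' => p j * poisson_binomial js' p (fun k => g (S k))
                + (1 - p j) * poisson_binomial js' p g
  end.

Fixpoint bernstein (m : nat) (p : R) (g : nat -> R) : R :=
  match m with
  | O => g 0%nat
  | S m' => p * bernstein m' p (fun k => g (S k)) + (1 - p) * bernstein m' p g
  end.

Lemma poisson_binomial_ext js : forall p p' g g',
  (forall j, In j js -> p j = p' j) -> (forall k, g k = g' k) ->
  poisson_binomial js p g = poisson_binomial js p' g'.
Proof.
  induction js as [|j js IH]; intros p p' g g' Hp Hg; simpl; auto.
  assert (Hp' : forall i, In i js -> p i = p' i) by (intros; apply Hp; simpl; auto).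
  rewrite (Hp j (or_introl eq_refl)), (IH p p' (fun k => g (S k)) (fun k => g' (S k))),
    (IH p p' g g'); auto.
Qed.

Lemma poisson_binomial_const js : forall p c g,
  (forall j, In j js -> p j = c) -> poisson_binomial js p g = bernstein (length js) c g.
Proof.
  induction js as [|j js IH]; intros p c g Hp; simpl; auto.
  assert (Hp' : forall i, In i js -> p i = c) by (intros; apply Hp; simpl; auto).
  rewrite (Hp j (or_introl eq_refl)), !(IH p c); auto.
Qed.

Lemma poisson_binomial_upd_notin js p i v g :
  ~ In i js -> poisson_binomial js (upd p i v) g = poisson_binomial js p g.
Proof.
  intros Hi; apply poisson_binomial_ext; auto.
  intros j Hj; unfold upd; destruct (Nat.eqb_spec j i); subst; tauto.
Qed.

Lemma poisson_binomial_upd_affine js : forall p i g v, NoDup js ->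
  poisson_binomial js (upd p i v) g =
  poisson_binomial js (upd p i 0) g
  + v * (poisson_binomial js (upd p i 1) g - poisson_binomial js (upd p i 0) g).
Proof.
  induction js as [|j js IH]; intros p i g v Hnd; simpl; [ring|].
  inversion Hnd as [|? ? Hj Hnd']; subst.
  destruct (Nat.eqb_spec j i) as [->|Hji].
  - assert (E : forall w, upd p i w i = w) by (intro; unfold upd; rewrite Nat.eqb_refl; auto).
    rewrite !E, !poisson_binomial_upd_notin by assumption; ring.
  - assert (E : forall w, upd p i w j = p j)
      by (intro; unfold upd; apply Nat.eqb_neq in Hji; rewrite Hji; auto).
    rewrite !E, (IH p i (fun k => g (S k)) v), (IH p i g v) by assumption; ring.
Qed.

Lemma RInt_poisson_binomial_upd js p i g f : NoDup js -> ex_RInt f 0 1 ->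
  RInt (fun t => poisson_binomial js (upd p i (f t)) g) 0 1 =
  poisson_binomial js (upd p i (RInt f 0 1)) g.
Proof.
  intros Hnd Hf.
  set (A := poisson_binomial js (upd p i 0) g).
  set (B := poisson_binomial js (upd p i 1) g - A).
  rewrite (poisson_binomial_upd_affine _ _ _ _ (RInt f 0 1) Hnd); fold A B.
  rewrite (RInt_ext _ (fun t => plus A (scal B (f t)))).
  2:{ intros t _; rewrite (poisson_binomial_upd_affine _ _ _ _ (f t) Hnd); fold A B.
      unfold plus, scal; simpl; unfold mult; simpl; ring. }
  rewrite (RInt_plus (V := R_CompleteNormedModule)), RInt_const,
    (RInt_scal (V := R_CompleteNormedModule)) by auto using ex_RInt_const, ex_RInt_scal.
  unfold plus, scal; simpl; unfold mult; simpl; ring.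
Qed.

Lemma sumR_app l1 l2 : sumR (l1 ++ l2) = sumR l1 + sumR l2.
Proof. induction l1 as [|a l1 IH]; simpl; [ring|]; rewrite IH; ring. Qed.

Lemma sumR_map_affine {A} (L : list A) (F G : A -> R) a b :
  sumR (map (fun c => a * F c + b * G c) L) = a * sumR (map F L) + b * sumR (map G L).
Proof. induction L as [|c L IH]; simpl; [ring|]; rewrite IH; ring. Qed.

Lemma sumR_flat_map {A B} (L : list A) (f : B -> R) (h : A -> list B) :
  sumR (map f (flat_map h L)) = sumR (map (fun c => sumR (map f (h c))) L).
Proof. induction L as [|c L IH]; simpl; auto; rewrite map_app, sumR_app, IH; auto. Qed.

Lemma sumR_cfgs_poisson_binomial W x m : forall k g,
  sumR (map (fun c => cfg_prob W x k c * g (ntrue c)) (cfgs m)) =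
  poisson_binomial (seq k m) (fun j => W (x 1%nat) (x j)) g.
Proof.
  induction m as [|m IH]; intros k g; simpl; [unfold ntrue; simpl; ring|].
  rewrite sumR_flat_map.
  rewrite (map_ext _ (fun c => W (x 1%nat) (x k) * (cfg_prob W x (S k) c * g (S (ntrue c)))
                    + (1 - W (x 1%nat) (x k)) * (cfg_prob W x (S k) c * g (ntrue c)))).
  2:{ intros c; unfold ntrue; simpl; ring. }
  rewrite sumR_map_affine, (IH (S k) (fun j => g (S j))), IH; auto.
Qed.

Definition indic_le (n : nat) (d : R) (k : nat) : R :=
  if Rle_dec (INR k / INR n) d then 1 else 0.

Lemma condP_poisson_binomial W n d x :
  condP W n d x = poisson_binomial (seq 2 n) (fun j => W (x 1%nat) (x j)) (indic_le n d).
Proof. apply (sumR_cfgs_poisson_binomial W x n 2 (indic_le n d)). Qed.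

Lemma iint_ext l : forall F F' x, (forall x, F x = F' x) -> iint l F x = iint l F' x.
Proof. induction l; intros; simpl; auto; apply RInt_ext; auto. Qed.

Section IntegratingOutNeighbours.
Variable W : R -> R -> R.
Hypothesis W_integrable : forall a, ex_RInt (fun t => W a t) 0 1.

Lemma iint_poisson_binomial js g (Hjs : NoDup js) : forall l x,
  NoDup l -> ~ In 1%nat l ->
  iint l (fun x => poisson_binomial js (fun j => W (x 1%nat) (x j)) g) x =
  poisson_binomial js
    (fun j => if in_dec Nat.eq_dec j l then Dfun W (x 1%nat) else W (x 1%nat) (x j)) g.
Proof.
  induction l as [|i l IH]; intros x Hl H1; cbn [iint]; [apply poisson_binomial_ext; auto|].
  inversion Hl as [|? ? Hi Hl']; subst.
  assert (Hi1 : Nat.eqb 1 i = false) by (apply Nat.eqb_neq; intro; subst; apply H1; left; auto).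
  assert (H1' : ~ In 1%nat l) by (intro; apply H1; right; auto).
  set (p := fun j => if in_dec Nat.eq_dec j l then Dfun W (x 1%nat) else W (x 1%nat) (x j)).
  rewrite (RInt_ext _ (fun t => poisson_binomial js (upd p i (W (x 1%nat) t)) g)).
  2:{ intros t _; rewrite IH by auto; apply poisson_binomial_ext; auto; intros j _.
      unfold upd, p; rewrite Hi1; destruct (Nat.eqb_spec j i) as [->|]; auto.
      destruct (in_dec Nat.eq_dec i l); tauto. }
  rewrite RInt_poisson_binomial_upd by auto.
  apply poisson_binomial_ext; auto; intros j _; unfold upd, p.
  destruct (Nat.eqb_spec j i) as [->|Hji].
  - destruct (in_dec Nat.eq_dec i (i :: l)) as [|[]]; [reflexivity|left; auto].
  - destruct (in_dec Nat.eq_dec j (i :: l)) as [[Hij|Hjl]|Hn];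
      destruct (in_dec Nat.eq_dec j l); try congruence; try tauto.
    exfalso; apply Hn; right; assumption.
Qed.

Lemma iint_condP n d x :
  iint (seq 2 n) (condP W n d) x = bernstein n (Dfun W (x 1%nat)) (indic_le n d).
Proof.
  rewrite (iint_ext _ _ _ _ (condP_poisson_binomial W n d)).
  rewrite iint_poisson_binomial by (auto using seq_NoDup; rewrite in_seq; lia).
  rewrite (poisson_binomial_const _ _ (Dfun W (x 1%nat))), length_seq; auto.
  intros j Hj; destruct (in_dec Nat.eq_dec j (seq 2 n)); tauto.
Qed.

Lemma iint_condP_except_2 m d x :
  iint (seq 3 m) (condP W (S m) d) x =
  W (x 1%nat) (x 2%nat) * bernstein m (Dfun W (x 1%nat)) (fun k => indic_le (S m) d (S k))
  + (1 - W (x 1%nat) (x 2%nat)) * bernstein m (Dfun W (x 1%nat)) (indic_le (S m) d).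
Proof.
  rewrite (iint_ext _ _ _ _ (condP_poisson_binomial W (S m) d)).
  rewrite iint_poisson_binomial by (auto using seq_NoDup; rewrite in_seq; lia).
  cbn [seq poisson_binomial].
  destruct (in_dec Nat.eq_dec 2%nat (seq 3 m)) as [Hin|_]; [rewrite in_seq in Hin; lia|].
  rewrite !(poisson_binomial_const _ _ (Dfun W (x 1%nat))), length_seq; auto;
    intros j Hj; destruct (in_dec Nat.eq_dec j (seq 3 m)); tauto.
Qed.

Lemma c_n_RInt n y :
  c_n W n y = RInt (fun t => bernstein n (Dfun W t) (indic_le n (Dfun W y))) 0 1.
Proof. apply RInt_ext; intros t _; apply iint_condP. Qed.

Lemma condE_X1_bernstein n y u :
  condE_X1 W n y u = bernstein n (Dfun W u) (indic_le n (Dfun W y)).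
Proof. apply iint_condP. Qed.

Lemma condE_X2_RInt m y u :
  condE_X2 W (S m) y u =
  RInt (fun t => W t u * bernstein m (Dfun W t) (fun k => indic_le (S m) (Dfun W y) (S k))
       + (1 - W t u) * bernstein m (Dfun W t) (indic_le (S m) (Dfun W y))) 0 1.
Proof.
  unfold condE_X2; replace (S m - 1)%nat with m by lia.
  apply RInt_ext; intros t _; apply iint_condP_except_2.
Qed.

End IntegratingOutNeighbours.

Lemma bernstein_ext m : forall p g g', (forall k, g k = g' k) ->
  bernstein m p g = bernstein m p g'.
Proof.
  induction m as [|m IH]; intros p g g' H; simpl; auto.
  rewrite (IH p (fun k => g (S k)) (fun k => g' (S k))), (IH p g g'); auto.
Qed.

Lemma bernstein_lin m : forall p g g' a b,
  bernstein m p (fun k => a * g k + b * g' k) = a * bernstein m p g + b * bernstein m p g'.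
Proof.
  induction m as [|m IH]; intros; simpl; auto.
  rewrite (IH p (fun k => g (S k)) (fun k => g' (S k))), IH; ring.
Qed.

Lemma bernstein_const m : forall p c, bernstein m p (fun _ => c) = c.
Proof. induction m as [|m IH]; intros; simpl; auto; rewrite !IH; ring. Qed.

Lemma bernstein_scal m p g a : bernstein m p (fun k => a * g k) = a * bernstein m p g.
Proof.
  rewrite (bernstein_ext m p _ (fun k => a * g k + 0 * g k)) by (intro; ring).
  rewrite bernstein_lin; ring.
Qed.

Lemma bernstein_complement m p g : bernstein m p (fun k => 1 - g k) = 1 - bernstein m p g.
Proof.
  rewrite (bernstein_ext m p _ (fun k => 1 * 1 + (-1) * g k)) by (intro; ring).
  rewrite bernstein_lin, bernstein_const; ring.
Qed.

Lemma bernstein_mono m : forall p g g', 0 <= p <= 1 -> (forall k, g k <= g' k) ->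
  bernstein m p g <= bernstein m p g'.
Proof.
  induction m as [|m IH]; intros p g g' Hp H; simpl; auto.
  pose proof (IH p (fun k => g (S k)) (fun k => g' (S k)) Hp (fun k => H (S k))).
  pose proof (IH p g g' Hp H); nra.
Qed.

Lemma bernstein_unit m p g : 0 <= p <= 1 -> (forall k, 0 <= g k <= 1) ->
  0 <= bernstein m p g <= 1.
Proof.
  intros Hp Hg; rewrite <- (bernstein_const m p 0), <- (bernstein_const m p 1) at 1.
  split; apply bernstein_mono; auto; apply Hg.
Qed.

Lemma bernstein_sq_shift m : forall p a,
  bernstein m p (fun k => (INR k + a) ^ 2) = (INR m * p + a) ^ 2 + INR m * p * (1 - p).
Proof.
  induction m as [|m IH]; intros; cbn [bernstein]; [simpl; ring|].
  rewrite (bernstein_ext m p _ (fun k => (INR k + (a + 1)) ^ 2)) by (intro; rewrite S_INR; ring).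
  rewrite !IH, S_INR; ring.
Qed.

Lemma bernstein_chebyshev n p g c : 0 <= p <= 1 -> 0 < c ->
  (forall k, 0 <= g k <= 1) -> (forall k, Rabs (INR k - INR n * p) < c -> g k = 0) ->
  bernstein n p g <= INR n / (4 * c ^ 2).
Proof.
  intros Hp Hc Hg Hg0.
  assert (Hc2 : 0 < c ^ 2) by (apply pow_lt; lra).
  apply Rle_trans with (bernstein n p (fun k => / c ^ 2 * (INR k + - (INR n * p)) ^ 2)).
  - apply bernstein_mono; auto; intro k.
    assert (Hnn : 0 <= / c ^ 2 * (INR k + - (INR n * p)) ^ 2)
      by (apply Rmult_le_pos; [apply Rlt_le, Rinv_0_lt_compat | apply pow2_ge_0]; auto).
    destruct (Rlt_or_le (Rabs (INR k - INR n * p)) c) as [Hlt|Hge];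
      [rewrite Hg0 by exact Hlt; exact Hnn|].
    assert (c ^ 2 <= (INR k + - (INR n * p)) ^ 2).
    { revert Hge; unfold Rabs; destruct Rcase_abs; intros; nra. }
    apply Rle_trans with 1; [apply Hg|].
    apply (Rmult_le_reg_l (c ^ 2)); auto; rewrite <- Rmult_assoc, Rinv_r; lra.
  - rewrite bernstein_scal, bernstein_sq_shift, Rplus_opp_r.
    pose proof (pos_INR n).
    replace (INR n / (4 * c ^ 2)) with (/ c ^ 2 * (INR n * / 4)) by (field; lra).
    apply Rmult_le_compat_l; [apply Rlt_le, Rinv_0_lt_compat; auto|].
    assert (0 <= INR n * (p - 1/2) ^ 2) by (apply Rmult_le_pos; [lra|apply pow2_ge_0]); nra.
Qed.

Lemma indic_le_unit n d k : 0 <= indic_le n d k <= 1.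
Proof. unfold indic_le; destruct Rle_dec; lra. Qed.

Lemma bernstein_indic_le_above n p d : (0 < n)%nat -> 0 <= p <= 1 -> d < p ->
  bernstein n p (indic_le n d) <= / (4 * INR n * (p - d) ^ 2).
Proof.
  intros Hn Hp Hd; assert (HN : 0 < INR n) by (apply lt_0_INR; lia).
  replace (/ (4 * INR n * (p - d) ^ 2)) with (INR n / (4 * (INR n * (p - d)) ^ 2))
    by (field; lra).
  apply bernstein_chebyshev; auto using indic_le_unit; [nra|].
  intros k Hk; apply Rabs_lt_between' in Hk; unfold indic_le.
  destruct Rle_dec as [Hkd|]; auto; apply Rle_div_l in Hkd; lra.
Qed.

Lemma bernstein_indic_le_below n p d : (0 < n)%nat -> 0 <= p <= 1 -> p < d ->
  1 - bernstein n p (indic_le n d) <= / (4 * INR n * (d - p) ^ 2).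
Proof.
  intros Hn Hp Hd; assert (HN : 0 < INR n) by (apply lt_0_INR; lia).
  replace (/ (4 * INR n * (d - p) ^ 2)) with (INR n / (4 * (INR n * (d - p)) ^ 2))
    by (field; lra).
  rewrite <- bernstein_complement.
  apply bernstein_chebyshev; auto; [nra| intro k; pose proof (indic_le_unit n d k); lra|].
  intros k Hk; apply Rabs_lt_between' in Hk; unfold indic_le.
  destruct Rle_dec as [|Hkd]; [ring|].
  exfalso; apply Hkd, Rle_div_l; lra.
Qed.

Definition bernstein_deriv (m : nat) (p : R) (g : nat -> R) : R :=
  INR m * (bernstein (pred m) p (fun k => g (S k)) - bernstein (pred m) p g).

Lemma is_derive_bernstein m g (p : R) :
  is_derive (fun q => bernstein m q g) p (bernstein_deriv m p g).
Proof.
  apply is_derive_Reals; revert g p; induction m as [|m IH]; intros g p.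
  - unfold bernstein_deriv; simpl; rewrite Rmult_0_l; apply derivable_pt_lim_const.
  - replace (bernstein_deriv (S m) p g) with
      ((1 * bernstein m p (fun k => g (S k)) + p * bernstein_deriv m p (fun k => g (S k)))
       + ((0 - 1) * bernstein m p g + (1 - p) * bernstein_deriv m p g)).
    + apply (derivable_pt_lim_plus (fun q => q * bernstein m q (fun k => g (S k)))
               (fun q => (1 - q) * bernstein m q g)).
      * apply (derivable_pt_lim_mult id); auto using derivable_pt_lim_id.
      * apply (derivable_pt_lim_mult (fun q => 1 - q)); auto.
        apply (derivable_pt_lim_minus (fun _ => 1) id);
          [apply derivable_pt_lim_const | apply derivable_pt_lim_id].
    + unfold bernstein_deriv; destruct m as [|k]; cbn [pred bernstein]; rewrite ?S_INR; simpl; ring.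
Qed.

Lemma continuous_bernstein_comp n g (f : R -> R) x :
  continuous f x -> continuous (fun t => bernstein n (f t) g) x.
Proof.
  intros Hf; apply (continuous_comp f (fun q => bernstein n q g)); auto.
  apply (ex_derive_continuous (fun q => bernstein n q g)); eexists; apply is_derive_bernstein.
Qed.

Lemma continuous_Rmult {U : UniformSpace} (f g : U -> R) x :
  continuous f x -> continuous g x -> continuous (fun t => f t * g t) x.
Proof. apply (continuous_mult (K := R_AbsRing)). Qed.

Lemma continuous_Rplus {U : UniformSpace} (f g : U -> R) x :
  continuous f x -> continuous g x -> continuous (fun t => f t + g t) x.
Proof. apply (continuous_plus (V := R_NormedModule)). Qed.

Lemma continuous_Rminus {U : UniformSpace} (f g : U -> R) x :
  continuous f x -> continuous g x -> continuous (fun t => f t - g t) x.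
Proof. apply (continuous_minus (V := R_NormedModule)). Qed.

Lemma continuous_Rdiv {U : UniformSpace} (f g : U -> R) x :
  continuous f x -> continuous g x -> g x <> 0 -> continuous (fun t => f t / g t) x.
Proof.
  intros Hf Hg Hg0; apply continuous_Rmult; auto.
  apply (continuous_comp g Rinv); auto; apply continuous_Rinv; auto.
Qed.

Lemma continuous_Rconst (c x : R) : continuous (fun _ : R => c) x.
Proof. apply continuous_const. Qed.

Lemma continuous_of_ex_derive (f : R -> R) x : ex_derive f x -> continuous f x.
Proof. apply (ex_derive_continuous (K := R_AbsRing) (V := R_NormedModule)). Qed.

Lemma ex_RInt_of_continuous (f : R -> R) a b :
  a <= b -> (forall t, a <= t <= b -> continuous f t) -> ex_RInt f a b.
Proof.
  intros Hab H; apply (ex_RInt_continuous (V := R_CompleteNormedModule)).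
  rewrite Rmin_left, Rmax_right by lra; auto.
Qed.

Lemma RInt_abs_le_RInt f g a b : a <= b -> ex_RInt f a b -> ex_RInt g a b ->
  (forall t, a < t < b -> Rabs (f t) <= g t) -> Rabs (RInt f a b) <= RInt g a b.
Proof.
  intros Hab Hf Hg H; apply Rabs_le; split.
  - rewrite <- (RInt_opp (V := R_CompleteNormedModule)) by auto.
    apply RInt_le; auto; [apply (ex_RInt_opp (V := R_NormedModule)); auto|].
    intros t Ht; specialize (H t Ht); apply Rabs_le_between in H; unfold opp; simpl; lra.
  - apply RInt_le; auto; intros t Ht; specialize (H t Ht); apply Rabs_le_between in H; lra.
Qed.

Lemma RInt_unit_range f : ex_RInt f 0 1 ->
  (forall t, 0 <= t <= 1 -> 0 <= f t <= 1) -> 0 <= RInt f 0 1 <= 1.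
Proof.
  intros Hf H.
  assert (Hc : forall c : R, RInt (fun _ => c) 0 1 = c)
    by (intro; rewrite RInt_const; unfold scal; simpl; unfold mult; simpl; ring).
  split.
  - apply Rle_trans with (RInt (fun _ => 0) 0 1); [rewrite Hc; lra|].
    apply RInt_le; auto using ex_RInt_const; [lra|]; intros t Ht; apply H; lra.
  - apply Rle_trans with (RInt (fun _ => 1) 0 1); [|rewrite Hc; lra].
    apply RInt_le; auto using ex_RInt_const; [lra|]; intros t Ht; apply H; lra.
Qed.

Definition jointly_continuous (F : R -> R -> R) (x y : R) : Prop :=
  continuous (fun p : R * R => F (fst p) (snd p)) (x, y).

Lemma continuous_fst_section F x y : jointly_continuous F x y -> continuous (fun t => F t y) x.
Proof.
  intro H; apply (continuous_comp_2 (fun t => t) (fun _ => y) F x);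
    auto using continuous_id, continuous_const.
Qed.

Lemma continuous_snd_section F x y : jointly_continuous F x y -> continuous (fun t => F x t) y.
Proof.
  intro H; apply (continuous_comp_2 (fun _ => x) (fun t => t) F y);
    auto using continuous_id, continuous_const.
Qed.

Lemma is_derive_RInt_param01 F x :
  (forall x y, jointly_continuous F x y) -> (forall x y, ex_derive (fun t => F t y) x) ->
  (forall x y, jointly_continuous (pd true F) x y) ->
  is_derive (fun x => RInt (fun s => F x s) 0 1) x (RInt (fun s => pd true F x s) 0 1).
Proof.
  intros Hc Hd Hc1; apply (is_derive_RInt_param F 0 1 x).
  - apply filter_forall; auto.
  - intros t _; apply continuity_2d_pt_filterlim, Hc1.
  - apply filter_forall; intro z; apply (ex_RInt_continuous (V := R_CompleteNormedModule)).
    intros; apply continuous_snd_section, Hc.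
Qed.

Lemma Rabs_telescope_le (a : nat -> R) c N :
  (forall k, (k < N)%nat -> Rabs (a (S k) - a k) <= c) -> Rabs (a N - a O) <= INR N * c.
Proof.
  induction N as [|N IH]; intros H; [rewrite Rminus_diag, Rabs_R0; simpl; lra|].
  replace (a (S N) - a O) with ((a (S N) - a N) + (a N - a O)) by ring.
  rewrite S_INR; eapply Rle_trans; [apply Rabs_triang|].
  pose proof (H N (Nat.lt_succ_diag_r N)).
  pose proof (IH (fun k Hk => H k (Nat.lt_lt_succ_r _ _ Hk))); lra.
Qed.

(* Uniform continuity bounds the increments of F along the N-step segment from
   (0,0) to (x,y) by 1. *)
Lemma continuous_bounded_unit_square (F : R -> R -> R) :
  (forall x y, 0 <= x <= 1 -> 0 <= y <= 1 -> jointly_continuous F x y) ->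
  exists M, 0 <= M /\ forall x y, 0 <= x <= 1 -> 0 <= y <= 1 -> Rabs (F x y) <= M.
Proof.
  intros H.
  destruct (uniform_continuity_2d F 0 1 0 1) with (eps := mkposreal 1 Rlt_0_1) as [delta Hd].
  { intros; apply continuity_2d_pt_filterlim, H; auto. }
  pose proof (cond_pos delta) as Hdelta.
  destruct (INR_unbounded (/ delta)) as [N HN].
  assert (HN0 : 0 < INR N) by (apply Rlt_trans with (/ delta); auto; apply Rinv_0_lt_compat; auto).
  assert (HNd : / INR N < delta).
  { rewrite <- (Rinv_inv delta); apply Rinv_lt_contravar; auto.
    apply Rmult_lt_0_compat; auto; apply Rinv_0_lt_compat; auto. }
  exists (Rabs (F 0 0) + INR N); split; [pose proof (Rabs_pos (F 0 0)); lra|].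
  intros x y Hx Hy.
  assert (Hgrid : forall z k, 0 <= z <= 1 -> (k <= N)%nat ->
                  0 <= INR k * z / INR N <= 1).
  { intros z k Hz Hk; apply le_INR in Hk; pose proof (pos_INR k); split.
    - apply Rmult_le_pos; [nra | apply Rlt_le, Rinv_0_lt_compat; auto].
    - apply Rle_div_l; nra. }
  assert (Hstep : forall z k, 0 <= z <= 1 ->
                  Rabs (INR (S k) * z / INR N - INR k * z / INR N) < delta).
  { intros z k Hz; rewrite S_INR.
    replace ((INR k + 1) * z / INR N - INR k * z / INR N) with (z / INR N) by (field; lra).
    apply Rle_lt_trans with (/ INR N); auto.
    rewrite Rabs_right by (apply Rle_ge, Rdiv_le_0_compat; lra).
    apply Rle_div_l; [lra|]; rewrite Rinv_l; lra. }
  pose proof (Rabs_telescope_le (fun k => F (INR k * x / INR N) (INR k * y / INR N)) 1 N)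
    as Htel; cbv beta in Htel.
  replace (INR N * x / INR N) with x in Htel by (field; lra).
  replace (INR N * y / INR N) with y in Htel by (field; lra).
  replace (INR 0 * x / INR N) with 0 in Htel by (simpl; field; lra).
  replace (INR 0 * y / INR N) with 0 in Htel by (simpl; field; lra).
  assert (Rabs (F x y - F 0 0) <= INR N * 1).
  { apply Htel; intros k Hk; apply Rlt_le, Hd; auto using Hgrid with arith. }
  pose proof (Rabs_triang_inv (F x y) (F 0 0)); lra.
Qed.

Lemma is_lim_seq_inv_INR : is_lim_seq (fun n => / INR n) 0.
Proof. apply (is_lim_seq_inv _ p_infty is_lim_seq_INR); discriminate. Qed.

Lemma is_lim_seq_inv_sqrt_INR : is_lim_seq (fun n => / sqrt (INR n)) 0.
Proof.
  apply (is_lim_seq_inv _ p_infty); [|discriminate].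
  exact (filterlim_comp _ _ _ INR sqrt _ _ _ is_lim_seq_INR filterlim_sqrt_p).
Qed.

Lemma is_lim_seq_of_rate (u r : nat -> R) (L : R) :
  (forall n, (1 <= n)%nat -> Rabs (u n - L) <= r n) -> is_lim_seq r 0 -> is_lim_seq u L.
Proof.
  intros H Hr; apply (is_lim_seq_le_le_loc (fun n => L - r n) u (fun n => L + r n)).
  - exists 1%nat; intros n Hn; apply Rabs_le_between', H; auto.
  - replace (Finite L) with (Finite (L - 0)) by (f_equal; ring).
    apply is_lim_seq_minus'; auto using is_lim_seq_const.
  - replace (Finite L) with (Finite (L + 0)) by (f_equal; ring).
    apply is_lim_seq_plus'; auto using is_lim_seq_const.
Qed.

Lemma inv_sqrt_le_Rpower n : (1 <= n)%nat -> / sqrt (INR n) <= Rpower (INR n) (- (1 / 4)).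
Proof.
  intros Hn; apply (le_INR 1) in Hn; simpl in Hn.
  rewrite <- Rpower_sqrt, <- Rpower_Ropp by lra; unfold Rpower.
  assert (0 <= ln (INR n)) by (rewrite <- ln_1; apply ln_le; lra).
  destruct (Req_dec (ln (INR n)) 0) as [E|E]; [rewrite E; right; f_equal; ring|].
  left; apply exp_increasing; nra.
Qed.

Lemma bernstein_indic_le_limit p d : 0 <= p <= 1 -> p <> d ->
  is_lim_seq (fun n => bernstein n p (indic_le n d)) ((if Rle_dec p d then 1 else 0) : R).
Proof.
  intros Hp Hpd.
  assert (Hsq : 0 < (p - d) ^ 2) by (apply pow2_gt_0; lra).
  apply (is_lim_seq_of_rate _ (fun n => / (4 * (p - d) ^ 2) * / INR n)).
  - intros n Hn; assert (HN : 0 < INR n) by (apply lt_0_INR; lia).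
    pose proof (bernstein_unit n p (indic_le n d) Hp (indic_le_unit n d)).
    replace (/ (4 * (p - d) ^ 2) * / INR n) with (/ (4 * INR n * (p - d) ^ 2)) by (field; lra).
    destruct (Rle_dec p d).
    + replace ((p - d) ^ 2) with ((d - p) ^ 2) by ring.
      rewrite Rabs_minus_sym, Rabs_right by lra.
      apply bernstein_indic_le_below; [lia | auto | lra].
    + rewrite Rminus_0_r, Rabs_right by lra.
      apply bernstein_indic_le_above; [lia | auto | lra].
  - replace (Finite 0) with (Rbar_mult (/ (4 * (p - d) ^ 2)) 0) by (simpl; f_equal; ring).
    apply is_lim_seq_scal_l, is_lim_seq_inv_INR.
Qed.

(* [4 b^2 / (s + b)^2] dominates [min 1 (b^2 / s^2)], the Chebyshev bound at
   distance s from the threshold, and has integral at most 4 b over s >= 0. *)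
Lemma le_step_profile s b x : 0 <= s -> 0 < b -> x <= 1 -> (0 < s -> x <= b ^ 2 / s ^ 2) ->
  x <= 4 * b ^ 2 / (s + b) ^ 2.
Proof.
  intros Hs Hb Hx H; assert (Hsb : 0 < (s + b) ^ 2) by (apply pow_lt; lra).
  apply Rle_div_r; [lra|].
  destruct (Rlt_or_le s b) as [Hl|Hl]; [nra|].
  specialize (H ltac:(lra)); apply Rle_div_r in H; [|apply pow_lt; lra].
  assert ((s + b) ^ 2 <= 4 * s ^ 2) by nra.
  destruct (Rle_or_lt 0 x); nra.
Qed.

Lemma step_profile_le s b : 0 < s -> 0 < b -> 4 * b ^ 2 / (s + b) ^ 2 <= 4 * b / s.
Proof.
  intros Hs Hb; apply Rle_div_l; [apply pow_lt; lra|].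
  replace (4 * b / s * (s + b) ^ 2) with (4 * b * ((s + b) ^ 2 / s)) by (field; lra).
  replace (4 * b ^ 2) with (4 * b * b) by ring.
  apply Rmult_le_compat_l; [lra|]; apply Rle_div_r; nra.
Qed.

Lemma RInt_abs_le_scal (f g : R -> R) a c M B : a <= c -> 0 <= M ->
  ex_RInt f a c -> ex_RInt g a c -> (forall t, a < t < c -> Rabs (f t) <= M * g t) ->
  RInt g a c <= B -> Rabs (RInt f a c) <= M * B.
Proof.
  intros Hac HM Hf Hg H HB; eapply Rle_trans.
  - apply (RInt_abs_le_RInt f (fun t => M * g t)); auto.
    apply (ex_RInt_scal (V := R_NormedModule)); auto.
  - rewrite (RInt_scal (V := R_CompleteNormedModule)) by auto.
    apply Rmult_le_compat_l; auto.
Qed.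

Section Threshold.
Variables (D : R -> R) (m y : R).
Hypothesis m_pos : 0 < m.
Hypothesis y_interior : 0 < y < 1.
Hypothesis D_unit : forall t, 0 <= t <= 1 -> 0 <= D t <= 1.
Hypothesis D_growth : forall s t, 0 <= s -> s <= t -> t <= 1 -> m * (t - s) <= D t - D s.
Hypothesis D_continuous : forall t, continuous D t.

Definition psi (n : nat) (t : R) : R := bernstein n (D t) (indic_le n (D y)).

(* Chosen so that the Chebyshev bound 1 / (4 n (m s)^2) reads width^2 / s^2. *)
Definition width (n : nat) : R := / (2 * m * sqrt (INR n)).

Lemma psi_continuous n t : continuous (psi n) t.
Proof. apply continuous_bernstein_comp, D_continuous. Qed.

Lemma psi_unit n t : 0 <= t <= 1 -> 0 <= psi n t <= 1.
Proof. intros; apply bernstein_unit; auto using indic_le_unit. Qed.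

Lemma width_pos n : (1 <= n)%nat -> 0 < width n.
Proof.
  intros Hn; apply Rinv_0_lt_compat, Rmult_lt_0_compat; [lra|].
  apply sqrt_lt_R0, lt_0_INR; lia.
Qed.

Lemma chebyshev_width n s p : (1 <= n)%nat -> 0 < s -> m * s <= p ->
  / (4 * INR n * p ^ 2) <= width n ^ 2 / s ^ 2.
Proof.
  intros Hn Hs Hp; assert (HN : 0 < INR n) by (apply lt_0_INR; lia).
  assert (Hsq : sqrt (INR n) ^ 2 = INR n) by (rewrite <- Rsqr_pow2; apply Rsqr_sqrt; lra).
  assert (0 < sqrt (INR n)) by (apply sqrt_lt_R0; lra).
  unfold width.
  replace ((/ (2 * m * sqrt (INR n))) ^ 2 / s ^ 2) with (/ (4 * sqrt (INR n) ^ 2 * (m * s) ^ 2))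
    by (field; lra).
  rewrite Hsq.
  apply Rinv_le_contravar; [apply Rmult_lt_0_compat; [lra|apply pow_lt; nra]|].
  apply Rmult_le_compat_l; [lra|]; apply pow_incr; nra.
Qed.

Lemma psi_below_y n t : (1 <= n)%nat -> 0 <= t <= y ->
  0 <= 1 - psi n t <= 4 * width n ^ 2 / (y - t + width n) ^ 2.
Proof.
  intros Hn Ht; pose proof (psi_unit n t ltac:(lra)); split; [lra|].
  apply le_step_profile; [lra | apply width_pos; auto | lra |]; intros Hs.
  pose proof (D_growth t y ltac:(lra) ltac:(lra) ltac:(lra)).
  eapply Rle_trans; [apply bernstein_indic_le_below; [lia | apply D_unit; lra | nra]|].
  apply chebyshev_width; auto.
Qed.

Lemma psi_above_y n t : (1 <= n)%nat -> y <= t <= 1 ->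
  0 <= psi n t <= 4 * width n ^ 2 / (t - y + width n) ^ 2.
Proof.
  intros Hn Ht; pose proof (psi_unit n t ltac:(lra)); split; [lra|].
  apply le_step_profile; [lra | apply width_pos; auto | lra |]; intros Hs.
  pose proof (D_growth y t ltac:(lra) ltac:(lra) ltac:(lra)).
  eapply Rle_trans; [apply bernstein_indic_le_above; [lia | apply D_unit; lra | nra]|].
  apply chebyshev_width; auto.
Qed.

Lemma RInt_profile_below_y b : 0 < b ->
  ex_RInt (fun t => 4 * b ^ 2 / (y - t + b) ^ 2) 0 y /\
  RInt (fun t => 4 * b ^ 2 / (y - t + b) ^ 2) 0 y <= 4 * b.
Proof.
  intros Hb.
  assert (I : is_RInt (fun t => 4 * b ^ 2 / (y - t + b) ^ 2) 0 y
                (4 * b ^ 2 / (y - y + b) - 4 * b ^ 2 / (y - 0 + b))).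
  { apply (is_RInt_derive (V := R_CompleteNormedModule) (fun t => 4 * b ^ 2 / (y - t + b)));
      intros t Ht; rewrite Rmin_left, Rmax_right in Ht by lra.
    + auto_derive; [lra | field; lra].
    + apply continuous_of_ex_derive; auto_derive.
      apply Rmult_integral_contrapositive; split; lra. }
  split; [eexists; exact I|]; rewrite (is_RInt_unique _ _ _ _ I).
  replace (y - y + b) with b by ring.
  assert (0 <= 4 * b ^ 2 / (y - 0 + b)) by (apply Rle_div_r; nra).
  replace (4 * b ^ 2 / b) with (4 * b) by (field; lra); lra.
Qed.

Lemma RInt_profile_above_y b : 0 < b ->
  ex_RInt (fun t => 4 * b ^ 2 / (t - y + b) ^ 2) y 1 /\
  RInt (fun t => 4 * b ^ 2 / (t - y + b) ^ 2) y 1 <= 4 * b.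
Proof.
  intros Hb.
  assert (I : is_RInt (fun t => 4 * b ^ 2 / (t - y + b) ^ 2) y 1
                (- (4 * b ^ 2 / (1 - y + b)) - - (4 * b ^ 2 / (y - y + b)))).
  { apply (is_RInt_derive (V := R_CompleteNormedModule) (fun t => - (4 * b ^ 2 / (t - y + b))));
      intros t Ht; rewrite Rmin_left, Rmax_right in Ht by lra.
    + auto_derive; [lra | field; lra].
    + apply continuous_of_ex_derive; auto_derive.
      apply Rmult_integral_contrapositive; split; lra. }
  split; [eexists; exact I|]; rewrite (is_RInt_unique _ _ _ _ I).
  replace (y - y + b) with b by ring.
  assert (0 <= 4 * b ^ 2 / (1 - y + b)) by (apply Rle_div_r; nra).
  replace (4 * b ^ 2 / b) with (4 * b) by (field; lra); lra.
Qed.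

Lemma RInt_mul_psi_near_step n (k : R -> R) M : (1 <= n)%nat ->
  (forall t, 0 <= t <= 1 -> continuous k t) -> (forall t, 0 <= t <= 1 -> Rabs (k t) <= M) ->
  Rabs (RInt (fun t => k t * psi n t) 0 1 - RInt k 0 y) <= 8 * M * width n.
Proof.
  intros Hn Hk HM; pose proof (width_pos n Hn) as Hb; set (b := width n) in *.
  assert (HM0 : 0 <= M) by (apply Rle_trans with (Rabs (k 0)); [apply Rabs_pos | apply HM; lra]).
  assert (Hint : forall f : R -> R, (forall t, 0 <= t <= 1 -> continuous f t) ->
                 forall a c, 0 <= a -> a <= c -> c <= 1 -> ex_RInt f a c).
  { intros f Hf a c Ha Hac Hc; apply ex_RInt_of_continuous; auto; intros; apply Hf; lra. }
  assert (Hkpsi : forall t, 0 <= t <= 1 -> continuous (fun t => k t * psi n t) t)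
    by (intros; apply continuous_Rmult; auto using psi_continuous).
  assert (Hlow : Rabs (RInt (fun t => k t * psi n t - k t) 0 y) <= M * (4 * b)).
  { destruct (RInt_profile_below_y b Hb) as [Hex Hle].
    apply (RInt_abs_le_scal _ (fun t => 4 * b ^ 2 / (y - t + b) ^ 2) 0 y M); auto; [lra| |].
    - apply Hint; [|lra..]; intros; apply continuous_Rminus; auto.
    - intros t Ht; pose proof (psi_below_y n t Hn ltac:(lra)) as Hpsi; fold b in Hpsi.
      replace (k t * psi n t - k t) with (k t * - (1 - psi n t)) by ring.
      rewrite Rabs_mult, Rabs_Ropp, (Rabs_right (1 - psi n t)) by lra.
      apply Rmult_le_compat; try lra; [apply Rabs_pos | apply HM; lra]. }
  assert (Hhigh : Rabs (RInt (fun t => k t * psi n t) y 1) <= M * (4 * b)).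
  { destruct (RInt_profile_above_y b Hb) as [Hex Hle].
    apply (RInt_abs_le_scal _ (fun t => 4 * b ^ 2 / (t - y + b) ^ 2) y 1 M); auto; [lra| |].
    - apply Hint; auto; lra.
    - intros t Ht; pose proof (psi_above_y n t Hn ltac:(lra)) as Hpsi; fold b in Hpsi.
      rewrite Rabs_mult, (Rabs_right (psi n t)) by lra.
      apply Rmult_le_compat; try lra; [apply Rabs_pos | apply HM; lra]. }
  rewrite <- (RInt_Chasles (V := R_CompleteNormedModule) _ 0 y 1) by (apply Hint; auto; lra).
  rewrite (RInt_minus (V := R_CompleteNormedModule)) in Hlow by (apply Hint; auto; lra).
  replace (plus (RInt (fun t => k t * psi n t) 0 y) (RInt (fun t => k t * psi n t) y 1)
           - RInt k 0 y)
    with (minus (RInt (fun t => k t * psi n t) 0 y) (RInt k 0 y)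
          + RInt (fun t => k t * psi n t) y 1)
    by (unfold minus, plus, opp; simpl; ring).
  eapply Rle_trans; [apply Rabs_triang|]; lra.
Qed.

Lemma RInt_psi_limit : is_lim_seq (fun n => RInt (psi n) 0 1) y.
Proof.
  apply (is_lim_seq_of_rate _ (fun n => 4 / m * / sqrt (INR n))).
  - intros n Hn.
    pose proof (RInt_mul_psi_near_step n (fun _ => 1) 1 Hn (fun t _ => continuous_Rconst 1 t)
                  (fun t _ => ltac:(cbv beta; rewrite Rabs_R1; lra))) as H.
    rewrite (RInt_ext (fun t => 1 * psi n t) (psi n)) in H by (intros; apply Rmult_1_l).
    rewrite RInt_const in H; unfold scal in H; simpl in H; unfold mult in H; simpl in H.
    replace (4 / m * / sqrt (INR n)) with (8 * 1 * width n)
      by (assert (0 < sqrt (INR n)) by (apply sqrt_lt_R0, lt_0_INR; lia);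
          unfold width; field; lra).
    replace ((y - 0) * 1) with y in H by ring; exact H.
  - replace (Finite 0) with (Rbar_mult (4 / m) 0) by (simpl; f_equal; ring).
    apply is_lim_seq_scal_l, is_lim_seq_inv_sqrt_INR.
Qed.

End Threshold.

Section Graphon.
Variable W : R -> R -> R.
Hypothesis W_graphon : graphon W.
Hypothesis W_regular : regularity_condition W.

Definition W1 : R -> R -> R := pd true W.
Definition W2 : R -> R -> R := pd true W1.
Definition D1 (x : R) : R := RInt (fun s => W1 x s) 0 1.
Definition D2 (x : R) : R := RInt (fun s => W2 x s) 0 1.

Lemma W_partial_continuous s : (length s <= 3)%nat ->
  forall x y, jointly_continuous (iter_pd s W) x y.
Proof. intros Hs x y; exact (proj1 (proj1 W_regular s Hs) x y). Qed.

Lemma W_partial_ex_derive s : (length s < 3)%nat ->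
  forall x y, ex_derive (fun t => iter_pd s W t y) x.
Proof. intros Hs x y; exact (proj1 (proj2 (proj1 W_regular s ltac:(lia)) Hs x y)). Qed.

Lemma is_derive_Dfun x : is_derive (Dfun W) x (D1 x).
Proof.
  apply (is_derive_RInt_param01 W x (W_partial_continuous nil ltac:(simpl; lia))
           (W_partial_ex_derive nil ltac:(simpl; lia))
           (W_partial_continuous (true :: nil) ltac:(simpl; lia))).
Qed.

Lemma is_derive_D1 x : is_derive D1 x (D2 x).
Proof.
  apply (is_derive_RInt_param01 W1 x (W_partial_continuous (true :: nil) ltac:(simpl; lia))
           (W_partial_ex_derive (true :: nil) ltac:(simpl; lia))
           (W_partial_continuous (true :: true :: nil) ltac:(simpl; lia))).
Qed.

Lemma ex_derive_D2 x : ex_derive D2 x.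
Proof.
  eexists; apply (is_derive_RInt_param01 W2 x
    (W_partial_continuous (true :: true :: nil) ltac:(simpl; lia))
    (W_partial_ex_derive (true :: true :: nil) ltac:(simpl; lia))
    (W_partial_continuous (true :: true :: true :: nil) ltac:(simpl; lia))).
Qed.

Lemma Dfun_continuous x : continuous (Dfun W) x.
Proof. apply continuous_of_ex_derive; eexists; apply is_derive_Dfun. Qed.

Lemma D1_continuous x : continuous D1 x.
Proof. apply continuous_of_ex_derive; eexists; apply is_derive_D1. Qed.

Lemma D2_continuous x : continuous D2 x.
Proof. apply continuous_of_ex_derive, ex_derive_D2. Qed.

Lemma W_continuous_fst t u : continuous (fun t => W t u) t.
Proof. apply continuous_fst_section, (W_partial_continuous nil); simpl; lia. Qed.

Lemma W_integrable a : ex_RInt (fun t => W a t) 0 1.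
Proof.
  apply ex_RInt_of_continuous; [lra|]; intros.
  apply continuous_snd_section, (W_partial_continuous nil); simpl; lia.
Qed.

Lemma W_unit t u : 0 <= t <= 1 -> 0 <= u <= 1 -> 0 <= W t u <= 1.
Proof. apply (proj2 W_graphon). Qed.

Lemma Dfun_unit t : 0 <= t <= 1 -> 0 <= Dfun W t <= 1.
Proof. intros Ht; apply RInt_unit_range; [apply W_integrable | intros; apply W_unit; auto]. Qed.

Lemma D1_pos t : 0 <= t <= 1 -> 0 < D1 t.
Proof.
  intros Ht; rewrite <- (is_derive_unique _ _ _ (is_derive_Dfun t)).
  apply (proj1 (proj2 W_regular)); auto.
Qed.

Lemma D1_lower_bound : exists m, 0 < m /\ forall t, 0 <= t <= 1 -> m <= D1 t.
Proof.
  destruct (continuity_ab_min D1 0 1) as [t0 [Hmin Ht0]]; [lra| |].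
  - intros; apply continuity_pt_filterlim, D1_continuous.
  - exists (D1 t0); split; auto using D1_pos.
Qed.

Lemma Dfun_growth m : (forall t, 0 <= t <= 1 -> m <= D1 t) ->
  forall s t, 0 <= s -> s <= t -> t <= 1 -> m * (t - s) <= Dfun W t - Dfun W s.
Proof.
  intros Hm s t Hs Hst Ht.
  destruct (MVT_gen (Dfun W) s t D1) as [c [Hc ->]].
  - intros; apply is_derive_Dfun.
  - intros; apply continuity_pt_filterlim, Dfun_continuous.
  - rewrite Rmin_left, Rmax_right in Hc by lra.
    apply Rmult_le_compat_r; [lra|]; apply Hm; lra.
Qed.

Lemma H_n_RInt n y u : (2 <= n)%nat ->
  H_n W n y u = RInt (fun t => (W t u - Dfun W t) *
                        bernstein_deriv n (Dfun W t) (indic_le n (Dfun W y))) 0 1.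
Proof.
  intros Hn; destruct n as [|k]; [lia|]; unfold H_n.
  rewrite condE_X2_RInt, c_n_RInt by apply W_integrable.
  set (g := indic_le (S k) (Dfun W y)).
  set (A := fun t => W t u * bernstein k (Dfun W t) (fun j => g (S j))
                     + (1 - W t u) * bernstein k (Dfun W t) g).
  set (B := fun t => bernstein (S k) (Dfun W t) g).
  assert (cA : forall t, continuous A t).
  { intros t; unfold A.
    apply continuous_Rplus; apply continuous_Rmult;
      auto using continuous_bernstein_comp, Dfun_continuous, W_continuous_fst.
    apply continuous_Rminus; auto using W_continuous_fst, continuous_const. }
  assert (cB : forall t, continuous B t)
    by (intros; apply continuous_bernstein_comp, Dfun_continuous).
  rewrite <- (RInt_minus (V := R_CompleteNormedModule) A B)
    by (apply ex_RInt_of_continuous; auto; lra).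
  rewrite <- (RInt_scal (V := R_CompleteNormedModule))
    by (apply ex_RInt_of_continuous; [lra|]; intros; apply continuous_Rminus; auto).
  apply RInt_ext; intros t _; unfold A, B, bernstein_deriv, scal, minus, plus, opp; simpl.
  unfold mult; simpl; ring.
Qed.

Lemma H_n_star_eq n y u : H_n_star W n y u =
  bernstein n (Dfun W u) (indic_le n (Dfun W y)) - RInt (psi (Dfun W) y n) 0 1.
Proof. unfold H_n_star; rewrite condE_X1_bernstein, c_n_RInt by apply W_integrable; auto. Qed.

(* The t-derivative of psi is D1 t * bernstein_deriv, so integrating by parts
   moves the derivative onto h. *)
Definition h (t u : R) : R := (W t u - Dfun W t) / D1 t.

Definition dh (t u : R) : R :=
  ((W1 t u - D1 t) * D1 t - (W t u - Dfun W t) * D2 t) / D1 t ^ 2.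

Lemma is_derive_h t u : 0 <= t <= 1 -> is_derive (fun t => h t u) t (dh t u).
Proof.
  intros Ht; apply (is_derive_div (fun t => W t u - Dfun W t) D1);
    [| apply is_derive_D1 | apply Rgt_not_eq, D1_pos]; auto.
  apply (is_derive_minus (fun t => W t u) (Dfun W)); [|apply is_derive_Dfun; auto].
  apply Derive_correct, (W_partial_ex_derive nil); simpl; lia.
Qed.

Lemma dh_jointly_continuous t u : 0 <= t <= 1 -> jointly_continuous dh t u.
Proof.
  intros Ht; unfold jointly_continuous, dh.
  assert (Hfst : forall f : R -> R, (forall x, continuous f x) ->
                 continuous (fun p : R * R => f (fst p)) (t, u))
    by (intros f Hf; apply (continuous_comp fst f); [apply continuous_fst | apply Hf]).
  assert (HD1 := Hfst _ D1_continuous).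
  pose proof (D1_pos t Ht).
  apply continuous_Rdiv; simpl.
  - apply continuous_Rminus; apply continuous_Rmult; auto using D2_continuous.
    + apply continuous_Rminus; auto.
      apply (W_partial_continuous (true :: nil)); simpl; lia.
    + apply continuous_Rminus; [|apply Hfst, Dfun_continuous; auto].
      apply (W_partial_continuous nil); simpl; lia.
  - repeat apply continuous_Rmult; auto using continuous_const.
  - apply Rgt_not_eq; nra.
Qed.

Lemma dh_bounded : exists M, 0 <= M /\
  forall t u, 0 <= t <= 1 -> 0 <= u <= 1 -> Rabs (dh t u) <= M.
Proof. apply continuous_bounded_unit_square; intros; apply dh_jointly_continuous; auto. Qed.

Lemma h_bound m t u : 0 < m -> (forall t, 0 <= t <= 1 -> m <= D1 t) ->
  0 <= t <= 1 -> 0 <= u <= 1 -> Rabs (h t u) <= / m.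
Proof.
  intros Hm HD1 Ht Hu; pose proof (W_unit t u Ht Hu).
  pose proof (Dfun_unit t Ht); pose proof (HD1 t Ht).
  unfold h, Rdiv; rewrite Rabs_mult, Rabs_inv, (Rabs_right (D1 t)) by lra.
  rewrite <- (Rmult_1_l (/ m)); apply Rmult_le_compat;
    [apply Rabs_pos | apply Rlt_le, Rinv_0_lt_compat; lra | apply Rabs_le; lra |].
  apply Rinv_le_contravar; lra.
Qed.

Lemma dh_continuous_fst t u : 0 <= t <= 1 -> continuous (fun t => dh t u) t.
Proof. intros; apply continuous_fst_section, dh_jointly_continuous; auto. Qed.

Lemma h_at_y y u : 0 <= y <= 1 -> h y u = h 0 u + RInt (fun t => dh t u) 0 y.
Proof.
  intros Hy.
  assert (I : is_RInt (fun t => dh t u) 0 y (minus (h y u) (h 0 u))).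
  { apply (is_RInt_derive (V := R_CompleteNormedModule) (fun t => h t u));
      intros t Ht; rewrite Rmin_left, Rmax_right in Ht by lra;
      [apply is_derive_h | apply dh_continuous_fst]; lra. }
  rewrite (is_RInt_unique _ _ _ _ I); unfold minus, plus, opp; simpl; ring.
Qed.

Lemma RInt_by_parts_psi y u n :
  let psi_n := psi (Dfun W) y n in
  RInt (fun t => (W t u - Dfun W t) * bernstein_deriv n (Dfun W t) (indic_le n (Dfun W y))) 0 1
  = h 1 u * psi_n 1 - h 0 u * psi_n 0 - RInt (fun t => dh t u * psi_n t) 0 1.
Proof.
  intros psi_n; set (g := indic_le n (Dfun W y)).
  assert (Hpsi : forall t, is_derive psi_n t (D1 t * bernstein_deriv n (Dfun W t) g)).
  { intros t; apply (is_derive_comp (fun p => bernstein n p g) (Dfun W));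
      [apply is_derive_bernstein | apply is_derive_Dfun; auto]. }
  assert (Hdb : forall t, continuous (fun t => D1 t * bernstein_deriv n (Dfun W t) g) t).
  { intros t; apply continuous_Rmult; [apply D1_continuous; auto|].
    unfold bernstein_deriv; apply continuous_Rmult; [apply continuous_const|].
    apply continuous_Rminus; apply continuous_bernstein_comp, Dfun_continuous; auto. }
  assert (Hpsic : forall t, continuous psi_n t)
    by (intros; apply psi_continuous, Dfun_continuous; auto).
  assert (I : is_RInt (fun t => dh t u * psi_n t + h t u * (D1 t * bernstein_deriv n (Dfun W t) g))
                0 1 (minus (h 1 u * psi_n 1) (h 0 u * psi_n 0))).
  { apply (is_RInt_derive (V := R_CompleteNormedModule) (fun t => h t u * psi_n t));
      intros t Ht; rewrite Rmin_left, Rmax_right in Ht by lra.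
    - apply (is_derive_mult (fun t => h t u) psi_n); auto using is_derive_h.
      intros; apply Rmult_comm.
    - apply continuous_Rplus; apply continuous_Rmult; auto using dh_continuous_fst.
      apply continuous_of_ex_derive; eexists; apply is_derive_h; auto. }
  apply (is_RInt_unique (V := R_CompleteNormedModule)) in I.
  rewrite (RInt_plus (V := R_CompleteNormedModule)) in I.
  - rewrite (RInt_ext (fun t => h t u * (D1 t * bernstein_deriv n (Dfun W t) g))
                      (fun t => (W t u - Dfun W t) * bernstein_deriv n (Dfun W t) g)) in I.
    + unfold minus, plus, opp in I; simpl in I; lra.
    + intros t Ht; rewrite Rmin_left, Rmax_right in Ht by lra.
      pose proof (D1_pos t ltac:(lra)).
      change (@eq R (h t u * (D1 t * bernstein_deriv n (Dfun W t) g))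
                    ((W t u - Dfun W t) * bernstein_deriv n (Dfun W t) g)).
      unfold h; field; lra.
  - apply ex_RInt_of_continuous; [lra|]; intros.
    apply continuous_Rmult; auto using dh_continuous_fst.
  - apply ex_RInt_of_continuous; [lra|]; intros.
    apply continuous_Rmult; auto.
    apply continuous_of_ex_derive; eexists; apply is_derive_h; auto.
Qed.

(* By parts, H_n - (D y - W y u) / D'(y) equals
   h 1 u * psi 1 + h 0 u * (1 - psi 0) - (int_0^1 dh psi - int_0^y dh). *)
Lemma H_n_expansion y m M n u : 0 < y < 1 -> 0 < m ->
  (forall t, 0 <= t <= 1 -> m <= D1 t) ->
  (forall t u, 0 <= t <= 1 -> 0 <= u <= 1 -> Rabs (dh t u) <= M) ->
  (2 <= n)%nat -> 0 <= u <= 1 ->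
  Rabs (H_n W n y u - (Dfun W y - W y u) / Derive (Dfun W) y) <=
  width m n * (4 / (m * (1 - y)) + 4 / (m * y) + 8 * M).
Proof.
  intros Hy Hm HD1 HM Hn Hu; assert (Hn1 : (1 <= n)%nat) by lia.
  pose proof Dfun_unit as HD.
  pose proof (Dfun_growth m HD1) as Hgrowth.
  pose proof Dfun_continuous as Hc.
  pose proof (width_pos m Hm n Hn1) as Hb.
  set (ps := psi (Dfun W) y n); set (b := width m n) in *.
  rewrite H_n_RInt, RInt_by_parts_psi by auto; fold ps.
  rewrite (is_derive_unique _ _ _ (is_derive_Dfun y)).
  replace ((Dfun W y - W y u) / D1 y) with (- h y u)
    by (unfold h; field; apply Rgt_not_eq, D1_pos; auto; lra).
  rewrite (h_at_y y u) by lra.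
  replace (h 1 u * ps 1 - h 0 u * ps 0 - RInt (fun t => dh t u * ps t) 0 1
           - - (h 0 u + RInt (fun t => dh t u) 0 y))
    with (h 1 u * ps 1 + h 0 u * (1 - ps 0)
          - (RInt (fun t => dh t u * ps t) 0 1 - RInt (fun t => dh t u) 0 y)) by ring.
  assert (H1 : Rabs (h 1 u * ps 1) <= b * (4 / (m * (1 - y)))).
  { pose proof (psi_above_y _ _ _ Hm Hy HD Hgrowth n 1 Hn1 ltac:(lra)) as P; fold ps b in P.
    pose proof (step_profile_le (1 - y) b ltac:(lra) Hb).
    pose proof (h_bound m 1 u Hm HD1 ltac:(lra) Hu).
    rewrite Rabs_mult, (Rabs_right (ps 1)) by lra.
    replace (b * (4 / (m * (1 - y)))) with (/ m * (4 * b / (1 - y))) by (field; lra).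
    apply Rmult_le_compat; auto using Rabs_pos; lra. }
  assert (H0 : Rabs (h 0 u * (1 - ps 0)) <= b * (4 / (m * y))).
  { pose proof (psi_below_y _ _ _ Hm Hy HD Hgrowth n 0 Hn1 ltac:(lra)) as P; fold ps b in P.
    replace (y - 0 + b) with (y + b) in P by ring.
    pose proof (step_profile_le y b ltac:(lra) Hb).
    pose proof (h_bound m 0 u Hm HD1 ltac:(lra) Hu).
    rewrite Rabs_mult, (Rabs_right (1 - ps 0)) by lra.
    replace (b * (4 / (m * y))) with (/ m * (4 * b / y)) by (field; lra).
    apply Rmult_le_compat; auto using Rabs_pos; lra. }
  pose proof (RInt_mul_psi_near_step _ _ _ Hm Hy HD Hgrowth Hc n (fun t => dh t u) M Hn1
                (fun t Ht => dh_continuous_fst t u Ht)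
                (fun t Ht => HM t u Ht Hu)) as Hstep; fold ps b in Hstep.
  unfold Rminus at 1; eapply Rle_trans; [apply Rabs_triang|]; rewrite Rabs_Ropp.
  eapply Rle_trans; [apply Rplus_le_compat_r, Rabs_triang|]; lra.
Qed.

Lemma H_n_star_unit n y u : 0 <= y <= 1 -> 0 <= u <= 1 -> Rabs (H_n_star W n y u) <= 1.
Proof.
  intros Hy Hu; rewrite H_n_star_eq by auto.
  pose proof Dfun_continuous as Hc.
  pose proof (bernstein_unit n (Dfun W u) (indic_le n (Dfun W y))
                (Dfun_unit u Hu) (indic_le_unit n _)).
  assert (0 <= RInt (psi (Dfun W) y n) 0 1 <= 1).
  { apply RInt_unit_range.
    - apply ex_RInt_of_continuous; [lra|]; intros; apply psi_continuous; auto.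
    - intros t Ht; apply bernstein_unit; auto using indic_le_unit.
      apply Dfun_unit; auto. }
  apply Rabs_le; lra.
Qed.

Lemma H_n_star_limit y u : 0 < y < 1 -> 0 <= u <= 1 -> u <> y ->
  is_lim_seq (fun n => H_n_star W n y u) ((if Rle_dec u y then 1 else 0) - y).
Proof.
  intros Hy Hu Huy.
  destruct D1_lower_bound as [m [Hm HD1]].
  pose proof (Dfun_growth m HD1) as Hgrowth.
  assert (Hlim : (if Rle_dec u y then 1 else 0) = (if Rle_dec (Dfun W u) (Dfun W y) then 1 else 0)).
  { destruct (Rle_dec u y), (Rle_dec (Dfun W u) (Dfun W y)); auto.
    - pose proof (Hgrowth u y ltac:(lra) ltac:(lra) ltac:(lra)); nra.
    - pose proof (Hgrowth y u ltac:(lra) ltac:(lra) ltac:(lra)); nra. }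
  apply (is_lim_seq_ext (fun n => bernstein n (Dfun W u) (indic_le n (Dfun W y))
                                  - RInt (psi (Dfun W) y n) 0 1)).
  { intros; symmetry; apply H_n_star_eq; auto. }
  rewrite Hlim; apply is_lim_seq_minus'.
  - apply bernstein_indic_le_limit; [apply Dfun_unit; auto|].
    intro E; destruct (Rlt_or_le u y) as [Hl|Hl];
      [pose proof (Hgrowth u y ltac:(lra) ltac:(lra) ltac:(lra))
      |pose proof (Hgrowth y u ltac:(lra) ltac:(lra) ltac:(lra))]; nra.
  - apply (RInt_psi_limit _ m); auto using Dfun_unit, Dfun_continuous.
Qed.

Lemma H_n_remainder y : 0 < y < 1 -> exists C, 0 < C /\
  forall n u, (2 <= n)%nat -> 0 <= u <= 1 ->
  Rabs (H_n W n y u - (Dfun W y - W y u) / Derive (Dfun W) y) <= C * Rpower (INR n) (- (1/4)).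
Proof.
  intros Hy.
  destruct D1_lower_bound as [m [Hm HD1]].
  destruct dh_bounded as [M [HM0 HM]].
  set (K := 4 / (m * (1 - y)) + 4 / (m * y) + 8 * M).
  assert (HK : 0 < K).
  { assert (0 < 4 / (m * (1 - y))) by (apply Rdiv_lt_0_compat; nra).
    assert (0 < 4 / (m * y)) by (apply Rdiv_lt_0_compat; nra).
    unfold K; lra. }
  exists (K / (2 * m)); split; [apply Rdiv_lt_0_compat; lra|].
  intros n u Hn Hu.
  eapply Rle_trans; [apply (H_n_expansion y m M); auto|]; fold K.
  pose proof (inv_sqrt_le_Rpower n ltac:(lia)).
  unfold width; rewrite Rinv_mult.
  replace (K / (2 * m) * Rpower (INR n) (- (1 / 4)))
    with (/ (2 * m) * Rpower (INR n) (- (1 / 4)) * K) by (field; lra).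
  apply Rmult_le_compat_r; [lra|]; apply Rmult_le_compat_l; auto.
  apply Rlt_le, Rinv_0_lt_compat; lra.
Qed.

End Graphon.

Theorem proposition8p2 (W : R -> R -> R)
  (HW : graphon W) (Hreg : regularity_condition W) :
  (forall y, 0 < y < 1 ->
     exists C, 0 < C /\
       forall (n : nat) (u : R), (2 <= n)%nat -> 0 <= u <= 1 ->
         Rabs (H_n W n y u - (Dfun W y - W y u) / Derive (Dfun W) y)
           <= C * Rpower (INR n) (- (1/4))) /\
  (forall y u, 0 < y < 1 -> 0 <= u <= 1 -> u <> y ->
     (forall n : nat, (2 <= n)%nat -> Rabs (H_n_star W n y u) <= 1) /\
     is_lim_seq (fun n => H_n_star W n y u)
                ((if Rle_dec u y then 1 else 0) - y)).
Proof.
  split.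
  - apply (H_n_remainder W HW Hreg).
  - intros y u Hy Hu Huy; split.
    + intros n _; apply H_n_star_unit; auto; lra.
    + apply H_n_star_limit; auto.
Qed.
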